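(* Let QH4 be the calculus obtained from intuitionistic predicate calculus QH by adding a unary connective $\nabla$ on problems and the postulate schemes $\alpha\to\nabla\alpha$, $\nabla\nabla\alpha\to\nabla\alpha$, $\nabla\bot\to\bot$, $\nabla(\alpha\to\beta)\to(\nabla\alpha\to\nabla\beta)$ (with the postulates and rules of QH applied to all formulas, including those containing $\nabla$). Then the translation replacing every occurrence of $\nabla$ by $!?$ is a syntactic interpretation of QH4 in QHC (every law, and every derivable rule, of QH4 is sent to a law, resp. derivable rule, of QHC), and it is the identity on formulas of QH.
   Context: QHC is a two-sorted first-order calculus. Its only terms are individual variables. Every formula is either a problem (denoted by Greek letters $\alpha,\beta,\gamma,\dots$) or a proposition (denoted by Latin letters $p,q,\dots$). Atomic formulas are proposition variables $p(t_1,\dots,t_n)$ (of proposition type), problem variables $\pi(t_1,\dots,t_n)$ (of problem type), and the constants $0$ (a proposition, classical falsity) and $\bot$ (a problem, intuitionistic absurdity). Propositions are closed under the classical connectives $\land,\lor,\to$ and quantifiers $\exists,\forall$; problems are closed under the intuitionistic connectives $\land,\lor,\to$ and quantifiers $\exists,\forall$ (the same symbols are used, distinguished by the type of the arguments). $\neg p$ abbreviates $p\to 0$, $\neg\alpha$ abbreviates $\alpha\to\bot$, and $\leftrightarrow$ is defined as usual. There are two type-conversion operators: if $p$ is a proposition then $!p$ is a problem, and if $\alpha$ is a problem then $?\alpha$ is a proposition. Deductive system of QHC: all axioms and rules of classical predicate logic applied to all propositions; all postulates and rules of intuitionistic predicate logic applied to all problems; the rules $p\,/\,!p$ and $\alpha\,/\,?\alpha$;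 and the schemas $?!p\to p$; $\alpha\to\, !?\alpha$; $!(p\to q)\to(!p\to !q)$; $?(\alpha\to\beta)\to(?\alpha\to ?\beta)$; $!0\to\bot$; $?(\alpha\land\beta)\leftrightarrow ?\alpha\land ?\beta$; $?(\alpha\lor\beta)\leftrightarrow ?\alpha\lor ?\beta$; $?\bot\to 0$; $?\exists x\,\alpha(x)\leftrightarrow\exists x\,?\alpha(x)$; $?\forall x\,\alpha(x)\to\forall x\,?\alpha(x)$ (usual variable side conditions implicit). $\vdash A$ means $A$ is derivable in QHC; $A\Rightarrow B$ means $\vdash A\to B$ and $A\Leftrightarrow B$ means $\vdash A\leftrightarrow B$ (with $A,B$ of the same type); $A\vdash B$ means $B$ is derivable in QHC from the premise $A$. Notation: $\Box p := ?!p$ (a proposition) and $\nabla\alpha := !?\alpha$ (a problem). QC and QH denote classical and intuitionistic predicate calculus. *)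

(* Individual variables are de Bruijn indices (nat); the only terms are
   variables, so substitution of a term for a variable is a renaming. *)
From Stdlib Require Import List.
Import ListNotations.

Definition up (f : nat -> nat) : nat -> nat :=
  fun n => match n with 0 => 0 | S m => S (f m) end.
(* instantiation of the bound variable 0 by the term (variable) t *)
Definition inst (t : nat) : nat -> nat :=
  fun n => match n with 0 => t | S m => m end.

Inductive prop : Type :=
| PVar  : nat -> list nat -> prop
| PFalse : prop
| PAnd  : prop -> prop -> prop
| POr   : prop -> prop -> prop
| PImp  : prop -> prop -> prop
| PEx   : prop -> prop                 (* binds variable 0 *)
| PAll  : prop -> prop
| PQ    : prob -> prop                 (* ?alpha *)
with prob : Type :=
| AVar  : nat -> list nat -> prob
| ABot  : prob
| AAnd  : prob -> prob -> prob
| AOr   : prob -> prob -> prob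
| AImp  : prob -> prob -> prob
| AEx   : prob -> prob
| AAll  : prob -> prob
| ABang : prop -> prob.                (* !p *)

Fixpoint renP (f : nat -> nat) (p : prop) : prop :=
  match p with
  | PVar n ts => PVar n (map f ts)
  | PFalse => PFalse
  | PAnd a b => PAnd (renP f a) (renP f b)
  | POr a b => POr (renP f a) (renP f b)
  | PImp a b => PImp (renP f a) (renP f b)
  | PEx a => PEx (renP (up f) a)
  | PAll a => PAll (renP (up f) a)
  | PQ a => PQ (renA f a)
  end
with renA (f : nat -> nat) (a : prob) : prob :=
  match a with
  | AVar n ts => AVar n (map f ts)
  | ABot => ABot
  | AAnd x y => AAnd (renA f x) (renA f y)
  | AOr x y => AOr (renA f x) (renA f y)
  | AImp x y => AImp (renA f x) (renA f y)
  | AEx x => AEx (renA (up f) x)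
  | AAll x => AAll (renA (up f) x)
  | ABang p => ABang (renP f p)
  end.

Definition PIff (a b : prop) : prop := PAnd (PImp a b) (PImp b a).

(* Hilbert-style: premises are treated as additional axioms and all rules
   (including generalization) apply to them, i.e. "derivable rule". *)
Inductive dP (Hp : list prop) (Ha : list prob) : prop -> Prop :=
| dP_hyp : forall p, In p Hp -> dP Hp Ha p
| dP_K : forall a b, dP Hp Ha (PImp a (PImp b a))
| dP_S : forall a b c, dP Hp Ha (PImp (PImp a (PImp b c)) (PImp (PImp a b) (PImp a c)))
| dP_andE1 : forall a b, dP Hp Ha (PImp (PAnd a b) a)
| dP_andE2 : forall a b, dP Hp Ha (PImp (PAnd a b) b)
| dP_andI : forall a b, dP Hp Ha (PImp a (PImp b (PAnd a b)))
| dP_orI1 : forall a b, dP Hp Ha (PImp a (POr a b))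
| dP_orI2 : forall a b, dP Hp Ha (PImp b (POr a b))
| dP_orE : forall a b c, dP Hp Ha (PImp (PImp a c) (PImp (PImp b c) (PImp (POr a b) c)))
| dP_efq : forall a, dP Hp Ha (PImp PFalse a)
| dP_dne : forall a, dP Hp Ha (PImp (PImp (PImp a PFalse) PFalse) a)
| dP_allE : forall a t, dP Hp Ha (PImp (PAll a) (renP (inst t) a))
| dP_exI : forall a t, dP Hp Ha (PImp (renP (inst t) a) (PEx a))
| dP_mp : forall a b, dP Hp Ha (PImp a b) -> dP Hp Ha a -> dP Hp Ha b
| dP_allR : forall a b, dP Hp Ha (PImp (renP S b) a) -> dP Hp Ha (PImp b (PAll a))
| dP_exR : forall a b, dP Hp Ha (PImp a (renP S b)) -> dP Hp Ha (PImp (PEx a) b)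
| dP_Q : forall a, dA Hp Ha a -> dP Hp Ha (PQ a)
| dP_QB : forall p, dP Hp Ha (PImp (PQ (ABang p)) p)
| dP_Qimp : forall a b, dP Hp Ha (PImp (PQ (AImp a b)) (PImp (PQ a) (PQ b)))
| dP_Qand : forall a b, dP Hp Ha (PIff (PQ (AAnd a b)) (PAnd (PQ a) (PQ b)))
| dP_Qor : forall a b, dP Hp Ha (PIff (PQ (AOr a b)) (POr (PQ a) (PQ b)))
| dP_Qbot : dP Hp Ha (PImp (PQ ABot) PFalse)
| dP_Qex : forall a, dP Hp Ha (PIff (PQ (AEx a)) (PEx (PQ a)))
| dP_Qall : forall a, dP Hp Ha (PImp (PQ (AAll a)) (PAll (PQ a)))
with dA (Hp : list prop) (Ha : list prob) : prob -> Prop :=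
| dA_hyp : forall a, In a Ha -> dA Hp Ha a
| dA_K : forall a b, dA Hp Ha (AImp a (AImp b a))
| dA_S : forall a b c, dA Hp Ha (AImp (AImp a (AImp b c)) (AImp (AImp a b) (AImp a c)))
| dA_andE1 : forall a b, dA Hp Ha (AImp (AAnd a b) a)
| dA_andE2 : forall a b, dA Hp Ha (AImp (AAnd a b) b)
| dA_andI : forall a b, dA Hp Ha (AImp a (AImp b (AAnd a b)))
| dA_orI1 : forall a b, dA Hp Ha (AImp a (AOr a b))
| dA_orI2 : forall a b, dA Hp Ha (AImp b (AOr a b))
| dA_orE : forall a b c, dA Hp Ha (AImp (AImp a c) (AImp (AImp b c) (AImp (AOr a b) c)))
| dA_efq : forall a, dA Hp Ha (AImp ABot a)
| dA_allE : forall a t, dA Hp Ha (AImp (AAll a) (renA (inst t) a))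
| dA_exI : forall a t, dA Hp Ha (AImp (renA (inst t) a) (AEx a))
| dA_mp : forall a b, dA Hp Ha (AImp a b) -> dA Hp Ha a -> dA Hp Ha b
| dA_allR : forall a b, dA Hp Ha (AImp (renA S b) a) -> dA Hp Ha (AImp b (AAll a))
| dA_exR : forall a b, dA Hp Ha (AImp a (renA S b)) -> dA Hp Ha (AImp (AEx a) b)
| dA_B : forall p, dP Hp Ha p -> dA Hp Ha (ABang p)
| dA_BQ : forall a, dA Hp Ha (AImp a (ABang (PQ a)))
| dA_Bimp : forall p q, dA Hp Ha (AImp (ABang (PImp p q)) (AImp (ABang p) (ABang q)))
| dA_Bfalse : dA Hp Ha (AImp (ABang PFalse) ABot).

Inductive F4 : Type :=
| V4 : nat -> list nat -> F4
| Bot4 : F4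
| And4 : F4 -> F4 -> F4
| Or4 : F4 -> F4 -> F4
| Imp4 : F4 -> F4 -> F4
| Ex4 : F4 -> F4
| All4 : F4 -> F4
| Nab4 : F4 -> F4.

Fixpoint ren4 (f : nat -> nat) (a : F4) : F4 :=
  match a with
  | V4 n ts => V4 n (map f ts)
  | Bot4 => Bot4
  | And4 x y => And4 (ren4 f x) (ren4 f y)
  | Or4 x y => Or4 (ren4 f x) (ren4 f y)
  | Imp4 x y => Imp4 (ren4 f x) (ren4 f y)
  | Ex4 x => Ex4 (ren4 (up f) x)
  | All4 x => All4 (ren4 (up f) x)
  | Nab4 x => Nab4 (ren4 f x)
  end.

Inductive D4 (H : list F4) : F4 -> Prop :=
| D4_hyp : forall a, In a H -> D4 H a
| D4_K : forall a b, D4 H (Imp4 a (Imp4 b a))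
| D4_S : forall a b c, D4 H (Imp4 (Imp4 a (Imp4 b c)) (Imp4 (Imp4 a b) (Imp4 a c)))
| D4_andE1 : forall a b, D4 H (Imp4 (And4 a b) a)
| D4_andE2 : forall a b, D4 H (Imp4 (And4 a b) b)
| D4_andI : forall a b, D4 H (Imp4 a (Imp4 b (And4 a b)))
| D4_orI1 : forall a b, D4 H (Imp4 a (Or4 a b))
| D4_orI2 : forall a b, D4 H (Imp4 b (Or4 a b))
| D4_orE : forall a b c, D4 H (Imp4 (Imp4 a c) (Imp4 (Imp4 b c) (Imp4 (Or4 a b) c)))
| D4_efq : forall a, D4 H (Imp4 Bot4 a)
| D4_allE : forall a t, D4 H (Imp4 (All4 a) (ren4 (inst t) a))
| D4_exI : forall a t, D4 H (Imp4 (ren4 (inst t) a) (Ex4 a))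
| D4_mp : forall a b, D4 H (Imp4 a b) -> D4 H a -> D4 H b
| D4_allR : forall a b, D4 H (Imp4 (ren4 S b) a) -> D4 H (Imp4 b (All4 a))
| D4_exR : forall a b, D4 H (Imp4 a (ren4 S b)) -> D4 H (Imp4 (Ex4 a) b)
| D4_N1 : forall a, D4 H (Imp4 a (Nab4 a))
| D4_N2 : forall a, D4 H (Imp4 (Nab4 (Nab4 a)) (Nab4 a))
| D4_N3 : D4 H (Imp4 (Nab4 Bot4) Bot4)
| D4_N4 : forall a b, D4 H (Imp4 (Nab4 (Imp4 a b)) (Imp4 (Nab4 a) (Nab4 b))).

Inductive FH : Type :=
| VH : nat -> list nat -> FH
| BotH : FH
| AndH : FH -> FH -> FH
| OrH : FH -> FH -> FH
| ImpH : FH -> FH -> FH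
| ExH : FH -> FH
| AllH : FH -> FH.

Fixpoint embH4 (a : FH) : F4 :=
  match a with
  | VH n ts => V4 n ts
  | BotH => Bot4
  | AndH x y => And4 (embH4 x) (embH4 y)
  | OrH x y => Or4 (embH4 x) (embH4 y)
  | ImpH x y => Imp4 (embH4 x) (embH4 y)
  | ExH x => Ex4 (embH4 x)
  | AllH x => All4 (embH4 x)
  end.

Fixpoint embHC (a : FH) : prob :=
  match a with
  | VH n ts => AVar n ts
  | BotH => ABot
  | AndH x y => AAnd (embHC x) (embHC y)
  | OrH x y => AOr (embHC x) (embHC y)
  | ImpH x y => AImp (embHC x) (embHC y)
  | ExH x => AEx (embHC x)
  | AllH x => AAll (embHC x)
  end.

Fixpoint tr (a : F4) : prob :=
  match a with
  | V4 n ts => AVar n ts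
  | Bot4 => ABot
  | And4 x y => AAnd (tr x) (tr y)
  | Or4 x y => AOr (tr x) (tr y)
  | Imp4 x y => AImp (tr x) (tr y)
  | Ex4 x => AEx (tr x)
  | All4 x => AAll (tr x)
  | Nab4 x => ABang (PQ (tr x))
  end.

(* The proof
   that replacing every nabla by !? interprets QH4 in QHC has three parts:
   - the translation commutes with renaming of individual variables, so the
     quantifier axioms and rules of QH4 are sent to instances of the
     corresponding axioms and rules of QHC;
   - the modality !? satisfies in QHC the four nabla postulates of QH4:
     alpha -> !?alpha is a QHC schema, and the other three follow from the
     propositional schemas ?!p -> p, ?bot -> 0, ?(a -> b) -> (?a -> ?b)
     lifted through ! by the rule p / !p and the schemas for !;
   - hence an induction on QH4 derivations (from arbitrary premises) gives
     a QHC derivation of the translation from the translated premises. *)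
From Stdlib Require Import List.

Lemma tr_ren (a : F4) (f : nat -> nat) : tr (ren4 f a) = renA f (tr a).
Proof.
  revert f; induction a; intros f; simpl;
    rewrite ?IHa, ?IHa1, ?IHa2; reflexivity.
Qed.

Section ModalityBangQuery.
Variables (Hp : list prop) (Ha : list prob).

Lemma dA_imp_trans (a b c : prob) :
  dA Hp Ha (AImp a b) -> dA Hp Ha (AImp b c) -> dA Hp Ha (AImp a c).
Proof.
  intros Hab Hbc.
  apply (dA_mp _ _ (AImp a b)); [| exact Hab].
  apply (dA_mp _ _ (AImp a (AImp b c))); [apply dA_S |].
  apply (dA_mp _ _ (AImp b c)); [apply dA_K | exact Hbc].
Qed.

Lemma dA_bang_mono (p q : prop) :
  dP Hp Ha (PImp p q) -> dA Hp Ha (AImp (ABang p) (ABang q)).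
Proof.
  intro Hpq. apply (dA_mp _ _ (ABang (PImp p q))); [apply dA_Bimp |].
  apply dA_B; exact Hpq.
Qed.

Lemma bang_query_idem (a : prob) :
  dA Hp Ha (AImp (ABang (PQ (ABang (PQ a)))) (ABang (PQ a))).
Proof. apply dA_bang_mono, dP_QB. Qed.

Lemma bang_query_bot : dA Hp Ha (AImp (ABang (PQ ABot)) ABot).
Proof.
  apply (dA_imp_trans _ (ABang PFalse)); [apply dA_bang_mono, dP_Qbot |].
  apply dA_Bfalse.
Qed.

Lemma bang_query_K (a b : prob) :
  dA Hp Ha (AImp (ABang (PQ (AImp a b)))
                 (AImp (ABang (PQ a)) (ABang (PQ b)))).
Proof.
  apply (dA_imp_trans _ (ABang (PImp (PQ a) (PQ b))));
    [apply dA_bang_mono, dP_Qimp | apply dA_Bimp].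
Qed.

End ModalityBangQuery.

Lemma tr_sound (Hp : list prop) (H : list F4) (a : F4) :
  D4 H a -> dA Hp (map tr H) (tr a).
Proof.
  induction 1; simpl; rewrite ?tr_ren.
  - apply dA_hyp, in_map; assumption.
  - apply dA_K.
  - apply dA_S.
  - apply dA_andE1.
  - apply dA_andE2.
  - apply dA_andI.
  - apply dA_orI1.
  - apply dA_orI2.
  - apply dA_orE.
  - apply dA_efq.
  - apply dA_allE.
  - apply dA_exI.
  - eapply dA_mp; eassumption.
  - apply dA_allR. simpl in IHD4. rewrite tr_ren in IHD4. exact IHD4.
  - apply dA_exR. simpl in IHD4. rewrite tr_ren in IHD4. exact IHD4.
  - apply dA_BQ.
  - apply bang_query_idem.
  - apply bang_query_bot.
  - apply bang_query_K.
Qed.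

Lemma tr_embH4 (a : FH) : tr (embH4 a) = embHC a.
Proof.
  induction a; simpl; rewrite ?IHa, ?IHa1, ?IHa2; reflexivity.
Qed.

Theorem proposition2p4 :
  (* laws of QH4 go to laws of QHC *)
  (forall a : F4, D4 nil a -> dA nil nil (tr a))
  (* derivable rules of QH4 go to derivable rules of QHC *)
  /\ (forall (H : list F4) (a : F4), D4 H a -> dA nil (map tr H) (tr a))
  (* the translation is the identity on QH formulas *)
  /\ (forall a : FH, tr (embH4 a) = embHC a).
Proof.
  split; [| split].
  - intros a Da. exact (tr_sound nil nil a Da).
  - exact (tr_sound nil).
  - exact tr_embH4.
Qed.
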